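(* Let $X=X(\Sigma)$ be an $n$-dimensional complete simplicial toric variety with homogeneous coordinate ring $S=\mathbb C[x_1,\dots,x_r]$, and let $z_0,\dots,z_n$ be monomials with $z_0\cdots z_n=x_1\cdots x_r$. Let $Z_i\subset X$ be the zero locus of $z_i$. Then $Z_1\cap\dots\cap Z_n$ is a finite set, consisting of the torus-fixed points $O_\sigma$ for the maximal cones $\sigma$ of $\Sigma$ that contain a ray $\rho_j$ with $x_j\mid z_i$ for each $i=1,\dots,n$.
   Context: $\Sigma$ is a complete simplicial fan in $N_\mathbb R$ with rays $\rho_1,\dots,\rho_r$; the variable $x_j$ corresponds to $\rho_j$ and its zero locus on $X$ is the torus-invariant prime divisor $D_j$. $O_\sigma$ denotes the torus orbit corresponding to a cone $\sigma$ (a fixed point when $\sigma$ is maximal). Since $z_0\cdots z_n=x_1\cdots x_r$, each variable divides exactly one $z_i$. *)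

(* Toric variety X(Sigma) presented as a Cox quotient
   (C^r \ Z(Sigma)) / G, with C modelled by algC. *)
From HB Require Import structures.
From mathcomp Require Import all_boot all_order all_algebra all_field.
Set Implicit Arguments. Unset Strict Implicit. Unset Printing Implicit Defensive.
Import Order.TTheory GRing.Theory Num.Theory.
Local Open Scope ring_scope.

Definition vC n r (v : 'I_r -> 'rV[int]_n) (j : 'I_r) : 'rV[algC]_n :=
  map_mx (fun z : int => z%:~R) (v j).

(* the cone spanned by the rays indexed by s (nonnegative real coefficients;
   in algC, 0 <= a forces a to be real) *)
Definition in_cone n r (v : 'I_r -> 'rV[int]_n) (s : {set 'I_r})
  (w : 'rV[algC]_n) : Prop :=
  exists a : 'I_r -> algC, (forall j, 0 <= a j) /\ w = \sum_(j in s) a j *: vC v j.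

(* Sigma: a complete simplicial fan in N_R with rays rho_1..rho_r
   (primitive generators v j); each cone is recorded by its set of rays. *)
Definition simplicial_complete_fan n r (v : 'I_r -> 'rV[int]_n)
  (cones : {set {set 'I_r}}) : Prop :=
  injective v /\
      (forall j, (\big[gcdn/0%N]_(k < n) absz (v j ord0 k))%N = 1%N) /\
      (forall j, [set j] \in cones) /\
      (forall s t : {set 'I_r}, s \in cones -> t \subset s -> t \in cones) /\
      (* simplicial: generators linearly independent *)
      (forall s : {set 'I_r}, s \in cones -> forall a : 'I_r -> algC,
          \sum_(j in s) a j *: vC v j = 0 -> forall j, j \in s -> a j = 0) /\
      (* fan: two cones meet along their common face *)
      (forall (s t : {set 'I_r}) w, s \in cones -> t \in cones ->
          in_cone v s w -> in_cone v t w -> in_cone v (s :&: t) w) /\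
      (* complete: the cones cover N_R *)
      (forall w : 'rV[algC]_n, (forall k, w ord0 k \is Num.real) ->
          exists2 s, s \in cones & in_cone v s w).

Definition maxcone r (cones : {set {set 'I_r}}) (s : {set 'I_r}) : Prop :=
  s \in cones /\ forall t : {set 'I_r}, t \in cones -> s \subset t -> t = s.

(* x in C^r lies outside the exceptional set Z(Sigma) *)
Definition notZ r (cones : {set {set 'I_r}}) (x : 'I_r -> algC) : Prop :=
  exists2 s, s \in cones & forall j, x j = 0 -> j \in s.

(* the group G = Hom(Cl(X), C^* ) inside (C^* )^r *)
Definition inG n r (v : 'I_r -> 'rV[int]_n) (t : 'I_r -> algC) : Prop :=
  (forall j, t j != 0) /\
  forall m : 'rV[int]_n, \prod_(j < r) t j ^ (\sum_(k < n) m ord0 k * v j ord0 k) = 1.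

(* x and y represent the same point of X = (C^r \ Z(Sigma)) / G *)
Definition Gequiv n r (v : 'I_r -> 'rV[int]_n) (x y : 'I_r -> algC) : Prop :=
  exists2 t, inG v t & forall j, y j = t j * x j.

Definition mono_eval r (e : 'I_r -> nat) (x : 'I_r -> algC) : algC :=
  \prod_(j < r) x j ^+ e j.

Definition inZ1n n r (e : 'I_n.+1 -> 'I_r -> nat) (x : 'I_r -> algC) : Prop :=
  forall i : 'I_n, mono_eval (e (lift ord0 i)) x = 0.

Definition in_Osigma r (s : {set 'I_r}) (x : 'I_r -> algC) : Prop :=
  forall j, x j = 0 <-> j \in s.

Definition good_cone n r (cones : {set {set 'I_r}}) (e : 'I_n.+1 -> 'I_r -> nat)
  (s : {set 'I_r}) : Prop :=
  maxcone cones s /\ forall i : 'I_n, exists2 j, j \in s & (0 < e (lift ord0 i) j)%N.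

(* A point x of X with x in Z_1, ..., Z_n vanishes, for each i, at some x_j
   dividing z_i; since each x_j divides only one z_i these are n distinct
   coordinates. The zeros of x lie in a single cone of the simplicial fan,
   which has at most n rays, so the zero set is exactly a cone with n rays,
   hence maximal, and x lies in its orbit. Such an orbit is a single point:
   the torus coordinates can be rescaled to 1 by an element of G, because
   the integer matrix of the n ray generators is invertible over C, so the
   system of characters defining G can be solved by taking roots. *)
From HB Require Import structures.
From mathcomp Require Import all_boot all_order all_algebra all_field.
Set Implicit Arguments. Unset Strict Implicit. Unset Printing Implicit Defensive.
Import Order.TTheory GRing.Theory Num.Theory.
Local Open Scope ring_scope.

Lemma sum1_pos_uniq m (f : 'I_m -> nat) a b :
  (\sum_(i < m) f i)%N = 1%N -> (0 < f a)%N -> (0 < f b)%N -> a = b.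
Proof.
move=> sum1 fa fb; apply/eqP; apply/negPn/negP => ab.
move: sum1; rewrite (bigD1 a) //= (bigD1 b) /=; last by rewrite eq_sym.
move: fa fb; case: (f a) => // p; case: (f b) => // q _ _.
by rewrite addSn addnS => -[].
Qed.

Section ExprzBig.
Variable F : fieldType.

Lemma exprz_sumr (I : finType) (x : F) (f : I -> int) : x != 0 ->
  x ^ (\sum_i f i) = \prod_i x ^ f i.
Proof.
move=> x0; apply: (big_morph (fun z : int => x ^ z)) => [a b|].
  by rewrite expfzDr.
by rewrite expr0z.
Qed.

Lemma prodr_exprz (I : finType) (y : I -> F) (z : int) :
  (forall i, y i != 0) -> (\prod_i y i) ^ z = \prod_i y i ^ z.
Proof.
move=> y0.
suff [] : (\prod_i y i != 0) /\ (\prod_i y i) ^ z = \prod_i y i ^ z by [].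
elim/big_rec2: _ => [|i a b _ [a0 <-]]; first by rewrite oner_neq0 exp1rz.
by split; [rewrite mulf_neq0 | rewrite exprzMl // unitfE].
Qed.

End ExprzBig.

Section MultiplicativeSystems.
Variable C : numClosedFieldType.

Lemma exprz_surj (d : int) (w : C) : d != 0 -> w != 0 ->
  exists2 u : C, u != 0 & u ^ d = w.
Proof.
case: d => [a|a] d0 w0.
  have a0 : (0 < a)%N by case: a d0.
  by exists (a.-root w); [rewrite rootC_eq0 | apply: rootCK].
exists (a.+1.-root w)^-1; first by rewrite invr_eq0 rootC_eq0.
by rewrite NegzE -exprz_inv invrK -exprnP; apply: rootCK.
Qed.

(* Take det A-th roots u of w and set T := u ^ (adj A); Cramer's identity
   adj A *m A = det A then gives T ^ A = u ^ (det A) = w. *)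
Lemma prodr_exprz_mx_solvable m (A : 'M[int]_m) (w : 'I_m -> C) :
  \det A != 0 -> (forall k, w k != 0) ->
  exists T : 'I_m -> C, (forall i, T i != 0) /\
    forall k, \prod_i T i ^ A i k = w k.
Proof.
move=> detA0 w0.
have /fin_all_exists [u Hu] : forall l, exists u : C, u != 0 /\ u ^ \det A = w l.
  by move=> l; have [u u0 uE] := exprz_surj detA0 (w0 l); exists u.
have u0 l : u l != 0 by case: (Hu l).
exists (fun i => \prod_l u l ^ \adj A l i); split.
  move=> i; rewrite prodf_seq_neq0; apply/allP => l _ /=.
  by rewrite expfz_neq0.
move=> k.
rewrite (eq_bigr (fun i => \prod_l u l ^ (\adj A l i * A i k))); last first.
  move=> i _; rewrite prodr_exprz => [|l]; last by rewrite expfz_neq0.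
  by apply: eq_bigr => l _; rewrite exprz_exp.
rewrite exchange_big /= (eq_bigr (fun l => u l ^ ((\det A)%:M : 'M_m) l k)).
  rewrite (bigD1 k) //= mxE eqxx mulr1n big1 ?mulr1; first by case: (Hu k).
  by move=> l /negbTE lk; rewrite mxE lk mulr0n expr0z.
by move=> l _; rewrite -exprz_sumr // -mul_adj_mx mxE.
Qed.

Lemma prodr_exprz_row_free_solvable m n (mn : m = n) (A : 'M[int]_(m, n))
    (w : 'I_n -> C) :
  row_free (map_mx (fun z : int => z%:~R) A : 'M[C]_(m, n)) ->
  (forall k, w k != 0) ->
  exists T : 'I_m -> C, (forall i, T i != 0) /\
    forall k, \prod_i T i ^ A i k = w k.
Proof.
subst n => freeA w0; apply: prodr_exprz_mx_solvable => //.
by move: freeA; rewrite row_free_unit unitmxE det_map_mx unitfE intr_eq0.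
Qed.

End MultiplicativeSystems.

Section Fan.
Variables (n r : nat) (v : 'I_r -> 'rV[int]_n).

Definition independent_rays (s : {set 'I_r}) : Prop :=
  forall a : 'I_r -> algC, \sum_(j in s) a j *: vC v j = 0 ->
    forall j, j \in s -> a j = 0.

Lemma fan_independent_rays (cones : {set {set 'I_r}}) :
  simplicial_complete_fan v cones ->
  forall s, s \in cones -> independent_rays s.
Proof. by case=> [_ [_ [_ [_ [indep _]]]]]. Qed.

Definition cone_mx (s : {set 'I_r}) : 'M[int]_(#|s|, n) :=
  \matrix_(i, k) v (enum_val i) ord0 k.

Lemma row_free_cone_mx (s : {set 'I_r}) : independent_rays s ->
  row_free (map_mx (fun z : int => z%:~R) (cone_mx s) : 'M[algC]_(#|s|, n)).
Proof.
move=> indep; apply: inj_row_free => u uA0.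
pose a j := \sum_(i | enum_val i == j) u ord0 i.
have aE i : a (enum_val i) = u ord0 i.
  rewrite /a (big_pred1 i) // => i' /=.
  by apply/eqP/eqP => [/enum_val_inj|->].
suff /indep a0 : \sum_(j in s) a j *: vC v j = 0.
  by apply/rowP => i; rewrite mxE -aE a0 ?enum_valP.
rewrite big_enum_val /=; apply/rowP => k.
have := congr1 (fun M : 'rV_n => M ord0 k) uA0; rewrite !mxE => <-.
by rewrite summxE; apply: eq_bigr => i _; rewrite aE !mxE.
Qed.

Lemma card_independent_rays (s : {set 'I_r}) : independent_rays s ->
  (#|s| <= n)%N.
Proof.
move=> /row_free_cone_mx/eqP <-.
exact: rank_leq_col.
Qed.

Lemma inG_of_char_eq1 (t : 'I_r -> algC) : (forall j, t j != 0) ->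
  (forall k, \prod_j t j ^ v j ord0 k = 1) -> inG v t.
Proof.
move=> t0 char1; split=> // m.
rewrite (eq_bigr (fun j => \prod_k (t j ^ v j ord0 k) ^ m ord0 k)); last first.
  move=> j _; rewrite exprz_sumr //.
  by apply: eq_bigr => k _; rewrite exprz_exp mulrC.
rewrite exchange_big /=; apply: big1 => k _.
by rewrite -prodr_exprz ?char1 ?exp1rz // => j; rewrite expfz_neq0.
Qed.

Definition orbit_point (s : {set 'I_r}) (j : 'I_r) : algC :=
  if j \in s then 0 else 1.

(* On s the coordinates of t are solved from the n x n system given by the
   rays of s; off s, t is x itself, so t rescales orbit_point s to x. *)
Lemma Gequiv_orbit_point (s : {set 'I_r}) (x : 'I_r -> algC) :
  independent_rays s -> #|s| = n -> in_Osigma s x ->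
  Gequiv v (orbit_point s) x.
Proof.
move=> indep card_s xO.
have xn0 j : j \notin s -> x j != 0.
  by move=> js; apply/eqP => /xO; rewrite (negbTE js).
pose P k := \prod_(j | j \notin s) x j ^ v j ord0 k.
have P0 k : P k != 0.
  rewrite prodf_seq_neq0; apply/allP => j _; apply/implyP => js.
  by rewrite expfz_neq0 // xn0.
have [|T [T0 TE]] := prodr_exprz_row_free_solvable (w := fun k => (P k)^-1)
  card_s (row_free_cone_mx indep).
  by move=> k; rewrite invr_eq0.
pose t j := if j \in s then \prod_(i | enum_val i == j) T i else x j.
have tE i : t (enum_val i) = T i.
  rewrite /t enum_valP (big_pred1 i) // => i' /=.
  by apply/eqP/eqP => [/enum_val_inj|->].
have t0 j : t j != 0.
  case js: (j \in s); first by rewrite -(enum_rankK_in js js) tE.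
  by rewrite /t js xn0 ?js.
exists t => [|j]; last first.
  rewrite /orbit_point; case js: (j \in s); last by rewrite mulr1 /t js.
  by rewrite mulr0; apply/xO.
apply: inG_of_char_eq1 => // k.
rewrite (bigID (fun j => j \in s)) /= big_enum_val /=.
rewrite (eq_bigr (fun i => T i ^ cone_mx s i k)) => [|i _]; last first.
  by rewrite tE mxE.
rewrite [X in _ * X](eq_bigr (fun j => x j ^ v j ord0 k)) => [|j /negbTE js].
  by rewrite TE mulVf.
by rewrite /t js.
Qed.

Lemma mono_eval_eq0 (f : 'I_r -> nat) (x : 'I_r -> algC) :
  mono_eval f x = 0 <-> exists2 j, x j = 0 & (0 < f j)%N.
Proof.
split=> [/eqP/prodf_eq0 [j _]|[j xj fj]].
  by rewrite expf_eq0 => /andP [fj /eqP xj]; exists j.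
by apply/eqP/prodf_eq0; exists j => //; rewrite expf_eq0 fj xj eqxx.
Qed.

Variables (cones : {set {set 'I_r}}) (e : 'I_n.+1 -> 'I_r -> nat).
Hypothesis cones_indep : forall {s}, s \in cones -> independent_rays s.
Hypothesis divides_one : forall j : 'I_r, (\sum_(i < n.+1) e i j)%N = 1%N.

Definition zeroset (x : 'I_r -> algC) : {set 'I_r} := [set j | x j == 0].

Lemma card_zeroset_inZ1n (x : 'I_r -> algC) : inZ1n e x ->
  (n <= #|zeroset x|)%N.
Proof.
move=> xZ.
have /fin_all_exists [g gP] : forall i : 'I_n,
    exists j, x j = 0 /\ (0 < e (lift ord0 i) j)%N.
  by move=> i; have /mono_eval_eq0 [j xj ej] := xZ i; exists j.
have g_inj : injective g.
  move=> i1 i2 g12; apply: (@lift_inj n.+1 ord0).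
  apply: (sum1_pos_uniq (divides_one (g i1))); first by case: (gP i1).
  by rewrite g12; case: (gP i2).
rewrite -[n in (n <= _)%N]card_ord -(card_imset _ g_inj).
apply: subset_leq_card; apply/subsetP => _ /imsetP [i _ ->].
by rewrite inE; case: (gP i) => ->.
Qed.

Lemma maxcone_card (s : {set 'I_r}) : s \in cones -> #|s| = n ->
  maxcone cones s.
Proof.
move=> sc card_s; split=> // t tc st; apply/eqP.
by rewrite eq_sym eqEcard st card_s (card_independent_rays (cones_indep tc)).
Qed.

Lemma inZ1n_zeroset_cone (x : 'I_r -> algC) : notZ cones x -> inZ1n e x ->
  [/\ zeroset x \in cones, #|zeroset x| = n & in_Osigma (zeroset x) x].
Proof.
move=> [s sc sZ] xZ.
have Zs : zeroset x \subset s by apply/subsetP => j; rewrite inE => /eqP/sZ.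
have card_s := card_independent_rays (cones_indep sc).
have card_Z := card_zeroset_inZ1n xZ.
have Z_eq : zeroset x = s.
  by apply/eqP; rewrite eqEcard Zs (leq_trans card_s card_Z).
rewrite Z_eq in card_Z *; split=> //; first by apply/anti_leq; rewrite card_s.
by move=> j; rewrite -Z_eq inE; split=> [->|/eqP].
Qed.

Lemma inZ1n_of_vanishing (s : {set 'I_r}) (x : 'I_r -> algC) :
  (forall i : 'I_n, exists2 j, j \in s & (0 < e (lift ord0 i) j)%N) ->
  (forall j, j \in s -> x j = 0) -> inZ1n e x.
Proof.
move=> s_hits x0 i; have [j js ej] := s_hits i.
by apply/mono_eval_eq0; exists j => //; apply: x0.
Qed.

Lemma inZ1n_iff_good_orbit (x : 'I_r -> algC) : notZ cones x ->
  inZ1n e x <-> exists2 s, good_cone cones e s & in_Osigma s x.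
Proof.
move=> xnZ; split=> [xZ|[s [_ s_hits] xO]]; last first.
  by apply: (inZ1n_of_vanishing s_hits) => j /xO.
have [Zc card_Z xO] := inZ1n_zeroset_cone xnZ xZ.
exists (zeroset x) => //; split; first exact: maxcone_card.
move=> i; have /mono_eval_eq0 [j xj ej] := xZ i.
by exists j => //; apply/xO.
Qed.

Lemma inZ1n_finite_orbits :
  exists (k : nat) (p : 'I_k -> 'I_r -> algC),
    (forall l, notZ cones (p l) /\ inZ1n e (p l)) /\
    (forall x, notZ cones x -> inZ1n e x -> exists l, Gequiv v (p l) x).
Proof.
pose S := [set s in cones | (#|s| == n) &&
            [forall i : 'I_n, [exists j in s, (0 < e (lift ord0 i) j)%N]]].
exists #|S|, (fun l => orbit_point (enum_val l)); split=> [l|x xnZ xZ].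
  have := enum_valP l; rewrite inE => /andP [sc /andP [_ /forallP s_hits]].
  split.
    exists (enum_val l) => // j.
    by rewrite /orbit_point; case: ifP => // _ /eqP; rewrite oner_eq0.
  apply: (inZ1n_of_vanishing (s := enum_val l)) => [i|j js].
    by have /exists_inP [j js ej] := s_hits i; exists j.
  by rewrite /orbit_point js.
have [Zc card_Z xO] := inZ1n_zeroset_cone xnZ xZ.
have ZS : zeroset x \in S.
  rewrite inE Zc card_Z eqxx /=; apply/forallP => i.
  have /mono_eval_eq0 [j xj ej] := xZ i.
  by apply/exists_inP; exists j => //; apply/xO.
exists (enum_rank_in ZS (zeroset x)); rewrite enum_rankK_in //.
exact: Gequiv_orbit_point (cones_indep Zc) card_Z xO.
Qed.

End Fan.

Theorem mainTheorem10 (n r : nat) (v : 'I_r -> 'rV[int]_n)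
  (cones : {set {set 'I_r}}) (e : 'I_n.+1 -> 'I_r -> nat) :
  simplicial_complete_fan v cones ->
  (* z_0 ... z_n = x_1 ... x_r *)
  (forall j : 'I_r, (\sum_(i < n.+1) e i j)%N = 1%N) ->
  (* Z_1 /\ ... /\ Z_n is the union of the O_sigma, sigma good *)
  (forall x : 'I_r -> algC, notZ cones x ->
     (inZ1n e x <-> exists2 s : {set 'I_r}, good_cone cones e s & in_Osigma s x)) /\
  (* Z_1 /\ ... /\ Z_n is a finite set of points of X *)
  (exists (k : nat) (p : 'I_k -> 'I_r -> algC),
     (forall l, notZ cones (p l) /\ inZ1n e (p l)) /\
     (forall x, notZ cones x -> inZ1n e x -> exists l, Gequiv v (p l) x)).
Proof.
move=> fan divides_one; have indep := fan_independent_rays fan.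
split; first exact (inZ1n_iff_good_orbit indep divides_one).
exact: inZ1n_finite_orbits indep divides_one.
Qed.
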